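(* Fix positive integers $l,n,r$. Let $\mathcal{L}$ be the set of isomorphism classes of $(l,n,r)$-hypergraphs and let $\mathcal{S}$ be the set of equivalence classes of bases of $\mathrm{S}_{n,\leq r}$ of size $l$. Then there is a bijection $\rho:\mathcal{L}\to\mathcal{S}$.
   Context: $\mathrm{S}_{n,\leq r}$ denotes the symmetric group $\mathrm{S}_n$ acting naturally on the set of subsets of $[n]=\{1,\dots,n\}$ of size at most $r$. A base of $\mathrm{S}_{n,\leq r}$ is a set $\mathcal{B}$ of (distinct) subsets of $[n]$, each of size at most $r$, whose pointwise stabiliser in $\mathrm{S}_n$ is trivial; its size is $|\mathcal{B}|$. Two bases $\mathcal{B}_1,\mathcal{B}_2$ are equivalent if $\mathcal{B}_1^\sigma=\mathcal{B}_2$ for some $\sigma\in\mathrm{S}_n$. For a hypergraph $H=(V,E)$ (edges are subsets of $V$, possibly the empty set) and $v\in V$, the neighbourhood of $v$ is the multiset $N_H(v)=\{e\in E: v\in e\}$ and the degree of $v$ is $|N_H(v)|$. A hypergraph is irrepeating if all its edges are distinct and all its vertices have distinct neighbourhoods. An $(l,n,r)$-hypergraph is an irrepeating hypergraph with $l$ vertices, $n$ edges (possibly including the empty edge), and maximum vertex degree at most $r$. *)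

From mathcomp Require Import all_boot all_fingroup.
Set Implicit Arguments. Unset Strict Implicit. Unset Printing Implicit Defensive.

(* A hypergraph with l vertices is modelled on the vertex set 'I_l; its edge
   set is a set of subsets of 'I_l (edges of an irrepeating hypergraph are
   distinct, so the edge multiset is a set; the empty edge is allowed). *)

Definition hg_nbhd (l : nat) (E : {set {set 'I_l}}) (v : 'I_l) : {set {set 'I_l}} :=
  [set e in E | v \in e].

Definition lnr_hypergraph (l n r : nat) (E : {set {set 'I_l}}) : bool :=
  [&& #|E| == n,
      [forall v : 'I_l, #|hg_nbhd E v| <= r]
    & injectiveb (hg_nbhd E)].

Definition perm_sets (m : nat) (s : {perm 'I_m}) (E : {set {set 'I_m}}) : {set {set 'I_m}} :=
  (fun e : {set 'I_m} => s @: e) @: E.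

Definition hg_iso (l : nat) (E1 E2 : {set {set 'I_l}}) : bool :=
  [exists s : {perm 'I_l}, perm_sets s E1 == E2].

Definition hg_class (l : nat) (E : {set {set 'I_l}}) : {set {set {set 'I_l}}} :=
  [set E' | hg_iso E E'].

Definition hg_classes (l n r : nat) : {set {set {set {set 'I_l}}}} :=
  (@hg_class l) @: [set E | @lnr_hypergraph l n r E].

(* base of S_{n,<=r}: subsets of size <= r with trivial pointwise stabiliser *)
Definition is_base (n r : nat) (B : {set {set 'I_n}}) : bool :=
  [forall e in B, #|e| <= r] &&
  [forall s : {perm 'I_n}, [forall e in B, s @: e == e] ==> (s == 1%g)].

Definition base_equiv (n : nat) (B1 B2 : {set {set 'I_n}}) : bool :=
  [exists s : {perm 'I_n}, perm_sets s B1 == B2].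

Definition base_class (n : nat) (B : {set {set 'I_n}}) : {set {set {set 'I_n}}} :=
  [set B' | base_equiv B B'].

Definition base_classes (l n r : nat) : {set {set {set {set 'I_n}}}} :=
  (@base_class n) @: [set B | @is_base n r B & #|B| == l].

From mathcomp Require Import all_boot all_fingroup.
Set Implicit Arguments. Unset Strict Implicit. Unset Printing Implicit Defensive.

(* Label the n edges of a hypergraph on [l] by a bijection f from [n].  The
   dual labelling v |-> {i | v \in f i} sends each vertex to the set of labels
   of its incident edges.  Distinct edges means that only the identity of S_n
   fixes every dual set, distinct neighbourhoods means that the l dual sets are
   distinct, and degrees become sizes of dual sets; so (l,n,r)-hypergraphs and
   bases of S_{n,<=r} of size l are two readings of the same labelled incidence
   structures.  Relabelling edges and vertices simultaneously commutes with
   duality, so isomorphism classes of hypergraphs and equivalence classes of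
   bases are both quotients of these structures by one and the same relation. *)

Section Transport.

Variables (T U W : finType) (X : {set T}) (F : T -> U) (G : T -> W) (w0 : W).
Hypothesis eq_kernel : {in X &, forall x y, (F x == F y) = (G x == G y)}.

Definition transport (u : U) : W :=
  if [pick x in X | F x == u] is Some x then G x else w0.

Lemma transportE x : x \in X -> transport (F x) = G x.
Proof.
move=> Xx; rewrite /transport; case: pickP => [y /andP[Xy FyFx] | /(_ x)].
  by apply/eqP; rewrite -eq_kernel.
by rewrite Xx eqxx.
Qed.

Lemma transport_inj : {in F @: X &, injective transport}.
Proof.
move=> _ _ /imsetP[x Xx ->] /imsetP[y Xy ->].
by rewrite !transportE // => /eqP; rewrite -eq_kernel // => /eqP.
Qed.

Lemma transport_imset : transport @: (F @: X) = G @: X.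
Proof. by rewrite -imset_comp; apply: eq_in_imset => x /transportE. Qed.

End Transport.

Lemma perm_invariant_injP (T : finType) (Y : eqType) (h : T -> Y) :
  reflect (forall s : {perm T}, h \o s =1 h -> s = 1%g) (injectiveb h).
Proof.
apply: (iffP (injectiveP h)) => [injh s hs | h_rigid i j hij].
  by apply/permP => i; rewrite perm1; apply: injh; apply: hs.
have: tperm i j = 1%g by apply: h_rigid => x /=; case: tpermP => // ->.
by move/permP/(_ i); rewrite tpermL perm1.
Qed.

Lemma perm_factor (T : finType) (Y : eqType) (F G : T -> Y) :
  injective F -> (forall i, exists j, G j = F i) ->
  exists s : {perm T}, G \o s =1 F.
Proof.
move=> injF imF_sub_imG.
pose h i := odflt i [pick j | G j == F i].
have Gh i : G (h i) = F i.
  rewrite /h; case: pickP => [j /eqP // | noj].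
  by have [j Gj] := imF_sub_imG i; move: (noj j); rewrite Gj eqxx.
have injh : injective h by move=> i k hik; apply: injF; rewrite -!Gh hik.
by exists (perm injh) => i; rewrite /= permE.
Qed.

Lemma perm_imsetT (T : finType) (s : {perm T}) : s @: setT = setT.
Proof.
by apply/eqP; rewrite eqEcard subsetT card_imset ?leqnn //; apply: perm_inj.
Qed.

Lemma perm_imset_eq (T : finType) (s : {perm T}) (A : {set T}) :
  (s @: A = A) <-> (forall x, (s x \in A) = (x \in A)).
Proof.
split=> [sA x | sA]; first by rewrite -{1}sA mem_imset //; apply: perm_inj.
apply/setP => x; rewrite -{1}(permKV s x) mem_imset; last exact: perm_inj.
by rewrite -sA permKV.
Qed.

Lemma exists_labelling (T : finType) (A : {set T}) k : #|A| = k ->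
  exists f : {ffun 'I_k -> T}, injective f /\ f @: setT = A.
Proof.
move=> <-; exists [ffun i => enum_val i]; split.
  by move=> i j; rewrite !ffunE; apply: enum_val_inj.
apply/setP => x; apply/imsetP/idP => [[i _ ->] | Ax].
  by rewrite ffunE enum_valP.
by exists (enum_rank_in Ax x); rewrite ?ffunE ?enum_rankK_in.
Qed.

Lemma eq_hg_class m (E1 E2 : {set {set 'I_m}}) :
  (hg_class E1 == hg_class E2) = hg_iso E1 E2.
Proof.
have orbitE E : hg_class E = orbit ('P^*)^* [set: {perm 'I_m}] E.
  apply/setP => E'; rewrite inE.
  by apply/existsP/imsetP => [[s /eqP <-] | [s _ ->]]; exists s.
by rewrite !orbitE eq_sym (sameP eqP orbit_eqP) -orbitE inE.
Qed.

Lemma base_classE n : @base_class n = @hg_class n.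
Proof. by []. Qed.

Definition dual (I V : finType) (f : I -> {set V}) : V -> {set I} :=
  fun v => [set i | v \in f i].

Lemma dualK (I V : finType) (f : I -> {set V}) : dual (dual f) =1 f.
Proof. by move=> i; apply/setP => v; rewrite !inE. Qed.

Definition incidence_iso (I V : finType) (f g : I -> {set V})
    (s : {perm I}) (p : {perm V}) :=
  forall i v, (p v \in g (s i)) = (v \in f i).

Lemma incidence_iso_dual (I V : finType) (f g : I -> {set V}) s p :
  incidence_iso f g s p <-> incidence_iso (dual f) (dual g) p s.
Proof.
by split=> iso i v; [rewrite !inE iso | move: (iso v i); rewrite !inE].
Qed.

Section Labellings.

Variables m k : nat.
Implicit Types (f g : 'I_m -> {set 'I_k}) (s : {perm 'I_m}) (p : {perm 'I_k}).

Lemma hg_nbhd_labels f v : hg_nbhd (f @: setT) v = f @: dual f v.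
Proof.
apply/setP => e; rewrite inE; apply/andP/imsetP => [[/imsetP[i _ ->] vi] | [i]].
  by exists i; rewrite ?inE.
by rewrite inE => vi ->; split; rewrite ?imset_f.
Qed.

Lemma card_labels_eq f : (#|f @: setT| == m) = injectiveb f.
Proof.
rewrite -[m in _ == m]card_ord -cardsT.
apply/imset_injP/injectiveP => [injf i j | injf i j _ _]; last exact: injf.
by apply: injf; rewrite inE.
Qed.

Definition lnr_labelling r f :=
  [&& injectiveb f, [forall v, #|dual f v| <= r] & injectiveb (dual f)].

Lemma lnr_hypergraph_labels r f :
  lnr_hypergraph m r (f @: setT) = lnr_labelling r f.
Proof.
rewrite /lnr_hypergraph /lnr_labelling card_labels_eq.
case: (injectiveP f) => //= injf; congr andb.
  by apply: eq_forallb => v; rewrite hg_nbhd_labels card_imset.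
apply/injectiveP/injectiveP => [inj_nbhd v w | inj_dual v w].
  by move=> dvw; apply: inj_nbhd; rewrite !hg_nbhd_labels dvw.
by rewrite !hg_nbhd_labels => /(imset_inj injf)/inj_dual.
Qed.

Lemma is_base_labels r f :
  is_base r (f @: setT) = [forall i, #|f i| <= r] && injectiveb (dual f).
Proof.
congr andb.
  apply/forall_inP/forallP => [sizes i | sizes e /imsetP[i _ ->] //].
  by rewrite sizes ?imset_f.
apply/forallP/perm_invariant_injP => [rigid p fixed | rigid p].
  apply/eqP/(implyP (rigid p))/forall_inP => e /imsetP[i _ ->].
  by apply/eqP/perm_imset_eq => v; move/setP: (fixed v) => /(_ i); rewrite !inE.
apply/implyP => /forall_inP fixed; apply/eqP/rigid => v; apply/setP => i.
by rewrite !inE; move: v; apply/perm_imset_eq/eqP/fixed; rewrite imset_f.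
Qed.

Lemma hg_iso_labelsP f g :
  injective f ->
  reflect (exists s p, incidence_iso f g s p) (hg_iso (f @: setT) (g @: setT)).
Proof.
move=> injf.
have perm_setsE p : perm_sets p (f @: setT) = (fun i => p @: f i) @: setT.
  by rewrite /perm_sets -imset_comp.
apply: (iffP existsP) => [[p /eqP] | [s [p iso]]].
  rewrite perm_setsE => im_pf.
  have [s gs] : exists s, g \o s =1 (fun i => p @: f i).
    apply: perm_factor => [i j /(imset_inj (@perm_inj _ p))/injf // | i].
    have: p @: f i \in g @: setT by rewrite -im_pf imset_f.
    by case/imsetP=> j _ ->; exists j.
  exists s, p => i v; move: (gs i) => /= ->.
  by rewrite mem_imset //; apply: perm_inj.
have -> : g @: setT = (g \o s) @: setT by rewrite [RHS]imset_comp perm_imsetT.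
exists p; rewrite perm_setsE; apply/eqP/eq_imset => i /=; symmetry.
by apply/setP => w; rewrite -(permKV p w) iso mem_imset //; apply: perm_inj.
Qed.

End Labellings.

Lemma eq_class_dual m k (f g : 'I_m -> {set 'I_k}) :
  injective f -> injective (dual f) ->
  (hg_class (f @: setT) == hg_class (g @: setT)) =
  (base_class (dual f @: setT) == base_class (dual g @: setT)).
Proof.
move=> injf injdf; rewrite base_classE !eq_hg_class.
apply/(hg_iso_labelsP g injf)/(hg_iso_labelsP (dual g) injdf) => -[s [p iso]].
  by exists p, s; apply: (incidence_iso_dual f g s p).1.
by exists p, s; apply: (incidence_iso_dual f g p s).2.
Qed.

Definition lnr_labellings l n r :=
  [set f : {ffun 'I_n -> {set 'I_l}} | lnr_labelling r f].

Lemma lnr_hypergraphsE l n r :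
  [set E | lnr_hypergraph n r E] =
  (fun f : {ffun 'I_n -> {set 'I_l}} => f @: setT) @: lnr_labellings l n r.
Proof.
apply/setP => E; rewrite inE; apply/idP/imsetP => [lnrE | [f]].
  have /and3P[/eqP/exists_labelling[f [injf imf]] _ _] := lnrE.
  by exists f; rewrite // inE -lnr_hypergraph_labels imf.
by rewrite inE -lnr_hypergraph_labels => ? ->.
Qed.

Lemma sized_basesE l n r :
  [set B | is_base r B & #|B| == l] =
  (fun f : {ffun 'I_n -> {set 'I_l}} => dual f @: setT) @: lnr_labellings l n r.
Proof.
have baseE (f : 'I_n -> {set 'I_l}) :
    is_base r (dual f @: setT) && (#|dual f @: setT| == l) = lnr_labelling r f.
  rewrite is_base_labels card_labels_eq (eq_injectiveb (dualK f)).
  by rewrite /lnr_labelling andbA (andbC (injectiveb f)).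
apply/setP => B; rewrite inE.
apply/idP/imsetP => [/andP[baseB /eqP cardB] | [f]].
  have [g [injg img]] := exists_labelling cardB.
  have dual_f : dual [ffun i => dual g i] =1 g.
    by move=> v; apply/setP => i; rewrite !inE ffunE inE.
  exists [ffun i => dual g i]; last by rewrite (eq_imset _ dual_f).
  by rewrite inE -baseE (eq_imset _ dual_f) img baseB cardB eqxx.
by rewrite inE -baseE => ? ->.
Qed.

Theorem proposition2p2 (l n r : nat) (hl : 0 < l) (hn : 0 < n) (hr : 0 < r) :
  exists rho : {set {set {set 'I_l}}} -> {set {set {set 'I_n}}},
    {in hg_classes l n r &, injective rho} /\
    rho @: hg_classes l n r = base_classes l n r.
Proof.
exists (transport (lnr_labellings l n r) (fun f => hg_class (f @: setT))
                    (fun f => base_class (dual f @: setT)) set0).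
rewrite /hg_classes /base_classes lnr_hypergraphsE sized_basesE.
rewrite -(imset_comp (@hg_class l)) -(imset_comp (@base_class n)).
split; [apply: transport_inj | apply: transport_imset];
  by move=> f g; rewrite inE => /and3P[/injectiveP injf _ /injectiveP injdf] _;
     apply: eq_class_dual.
Qed.
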